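(* Let $\delta$ satisfy the Kalmanson conditions with respect to $\pi=(x_1,\dots,x_n)$, let $C_1,\dots,C_m$ ($m\ge4$) be a partition of $X$ into consecutive intervals of $\pi$ in this order, and let $\mu$ be a block weighting. Then for every $1\le i$ with $i+3\le m$, \[Q_\delta(C_i,C_{i+3})-Q_\delta(C_{i+1},C_{i+2})\ge0.\]
   Context: $X=\{1,\dots,n\}$. A dissimilarity map is $\delta:X\times X\to\mathbb{R}$ with $\delta(i,j)=\delta(j,i)\ge0$, $\delta(i,i)=0$. A circular ordering is a listing $\pi=(x_1,\dots,x_n)$ of $X$ regarded cyclically. $\delta$ satisfies the Kalmanson conditions with respect to $\pi$ if for all $1\le i<j<k<l\le n$: $\delta(x_i,x_j)+\delta(x_k,x_l)\le\delta(x_i,x_k)+\delta(x_j,x_l)$ and $\delta(x_i,x_l)+\delta(x_j,x_k)\le\delta(x_i,x_k)+\delta(x_j,x_l)$. The partition into consecutive intervals means $C_1=\{x_1,\dots,x_{a_1}\}$, $C_2=\{x_{a_1+1},\dots,x_{a_2}\},\dots,C_m=\{x_{a_{m-1}+1},\dots,x_n\}$. A block weighting is $\mu:X\to\mathbb{R}_{\ge0}$ with $\sum_{x\in C_r}\mu(x)=1$ for every $r$. Set $\delta(C_r,C_s)=\sum_{x\in C_r,y\in C_s}\mu(x)\mu(y)\delta(x,y)$ and $Q_\delta(C_r,C_s)=(m-2)\delta(C_r,C_s)-\sum_{t\ne r}\delta(C_r,C_t)-\sum_{t\ne s}\delta(C_s,C_t)$. *)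

(* X = 'I_n ; a circular ordering pi = (x_1,...,x_n) is a
   permutation pi of 'I_n, with x_(k+1) = pi k (0-indexed positions). *)
From HB Require Import structures.
From mathcomp Require Import all_boot all_order all_fingroup all_algebra.
Set Implicit Arguments. Unset Strict Implicit. Unset Printing Implicit Defensive.
Import Order.TTheory GRing.Theory Num.Theory.
Local Open Scope ring_scope.

Section Defs.
Variables (R : realFieldType) (n : nat).

Definition dissimilarity (d : 'I_n -> 'I_n -> R) : Prop :=
  (forall x y, d x y = d y x) /\ (forall x y, 0 <= d x y) /\ (forall x, d x x = 0).

Definition kalmanson (d : 'I_n -> 'I_n -> R) (pi : {perm 'I_n}) : Prop :=
  forall i j k l : 'I_n, (i < j)%N -> (j < k)%N -> (k < l)%N ->
    d (pi i) (pi j) + d (pi k) (pi l) <= d (pi i) (pi k) + d (pi j) (pi l) /\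
    d (pi i) (pi l) + d (pi j) (pi k) <= d (pi i) (pi k) + d (pi j) (pi l).

(* Partition into m consecutive intervals given by boundaries
   a 0 = 0 <= a 1 <= ... <= a m = n ; block r (0-indexed, r < m) consists of
   the elements pi k with a r <= k < a (r+1). *)
Definition interval_partition (m : nat) (a : nat -> nat) : Prop :=
  a 0%N = 0%N /\ a m = n /\ (forall r, (r < m)%N -> (a r <= a r.+1)%N).

Definition in_block (a : nat -> nat) (r : nat) (k : 'I_n) : bool :=
  (a r <= k)%N && (k < a r.+1)%N.

Definition block_weighting (m : nat) (a : nat -> nat) (pi : {perm 'I_n})
    (mu : 'I_n -> R) : Prop :=
  (forall x, 0 <= mu x) /\
  (forall r, (r < m)%N -> \sum_(k < n | in_block a r k) mu (pi k) = 1).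

Definition block_dist (d : 'I_n -> 'I_n -> R) (pi : {perm 'I_n}) (a : nat -> nat)
    (mu : 'I_n -> R) (r s : nat) : R :=
  \sum_(k < n | in_block a r k) \sum_(l < n | in_block a s l)
     mu (pi k) * mu (pi l) * d (pi k) (pi l).

Definition Qdelta (d : 'I_n -> 'I_n -> R) (pi : {perm 'I_n}) (m : nat)
    (a : nat -> nat) (mu : 'I_n -> R) (r s : nat) : R :=
  (m - 2)%N%:R * block_dist d pi a mu r s
  - \sum_(t < m | t != r :> nat) block_dist d pi a mu r t
  - \sum_(t < m | t != s :> nat) block_dist d pi a mu s t.

End Defs.

From HB Require Import structures.
From mathcomp Require Import all_boot all_order all_fingroup all_algebra.
From mathcomp Require Import zify ring lra.

(** The block distances [delta(C_r, C_s)] form a symmetric matrix which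
   again satisfies the Kalmanson conditions, since these are linear and the
   blocks are consecutive: averaging a Kalmanson inequality over one point
   from each of four blocks gives the same inequality for the blocks.  For
   any symmetric Kalmanson matrix [D] on [0, m), the difference
   [Q(i, i+3) - Q(i+1, i+2)] expands into a sum over the [m - 4] indices [t]
   outside [i..i+3] of
   [D(i, i+3) - D(i+1, i+2) + D(i+1, t) + D(i+2, t) - D(i, t) - D(i+3, t)],
   and each such term is the sum of two Kalmanson inequalities. *)

Set Implicit Arguments.
Unset Strict Implicit.
Unset Printing Implicit Defensive.
Import Order.TTheory GRing.Theory Num.Theory.
Local Open Scope ring_scope.

Section NatSums.
Variables (V : zmodType) (m : nat).

Lemma sumr_ord_neq (F : nat -> V) r : (r < m)%N ->
  \sum_(t < m | t != r :> nat) F t = \sum_(0 <= t < m) F t - F r.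
Proof.
move=> rm; rewrite big_mkord [in RHS](bigD1 (Ordinal rm)) //=.
by rewrite addrAC subrr add0r.
Qed.

Lemma sumr_nat_cut4 (F : nat -> V) i : (i.+4 <= m)%N ->
  \sum_(0 <= t < m) F t =
  \sum_(0 <= t < i) F t + (F i + F i.+1 + F i.+2 + F i.+3) + \sum_(i.+4 <= t < m) F t.
Proof.
move=> im; have sum4 : \sum_(i <= t < i.+4) F t = F i + F i.+1 + F i.+2 + F i.+3.
  by do 4!(rewrite big_ltn; last lia); rewrite big_geq // addr0 !addrA.
rewrite (@big_cat_nat _ _ _ i) 1?(@big_cat_nat _ _ _ i.+4 i) -?sum4; [exact: addrA | lia..].
Qed.

End NatSums.

Definition kalmanson_upto (R : numDomainType) (m : nat) (D : nat -> nat -> R) :=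
  forall p q r s, (p < q)%N -> (q < r)%N -> (r < s)%N -> (s < m)%N ->
    D p q + D r s <= D p r + D q s /\ D p s + D q r <= D p r + D q s.

Section Qform.
Variables (R : realFieldType) (m : nat) (D : nat -> nat -> R).
Hypothesis D_sym : forall r s, D r s = D s r.

Definition Qform (r s : nat) : R :=
  (m - 2)%N%:R * D r s
  - \sum_(t < m | t != r :> nat) D r t - \sum_(t < m | t != s :> nat) D s t.

Definition Qgap (i t : nat) : R :=
  D i i.+3 - D i.+1 i.+2 + D i.+1 t + D i.+2 t - D i t - D i.+3 t.

Lemma Qform_diffE i : (i.+3 < m)%N ->
  Qform i i.+3 - Qform i.+1 i.+2 =
  \sum_(0 <= t < i) Qgap i t + \sum_(i.+4 <= t < m) Qgap i t.
Proof.
(* By symmetry, the terms with [t] in [i..i+3] cancel the excluded diagonal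
   terms [D r r] up to two copies of [D i i.+3 - D i.+1 i.+2], so the
   coefficient [m - 2] is shared out among the [m - 4] outer indices. *)
move=> im; rewrite /Qform /Qgap !sumr_ord_neq; try lia.
rewrite !(sumr_nat_cut4 _ im) !big_split /= !sumrN !sumr_const_nat subn0.
have -> : (m - 2)%N%:R = i%:R + (m - i.+4)%N%:R + 2%:R :> R.
  by rewrite -!natrD; congr _%:R; lia.
rewrite (D_sym i.+1 i) (D_sym i.+2 i) (D_sym i.+3 i) (D_sym i.+2 i.+1)
  (D_sym i.+3 i.+1) (D_sym i.+3 i.+2).
ring.
Qed.

Lemma Qgap_ge0 i t : kalmanson_upto m D -> (i.+3 < m)%N -> (t < m)%N ->
  (t < i)%N || (i.+3 < t)%N -> 0 <= Qgap i t.
Proof.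
rewrite /Qgap => DK im tm /orP[ti | it].
- have [K1 _] := DK t i i.+1 i.+3 ti (ltnSn i) (ltn_trans (ltnSn _) (ltnSn _)) im.
  have [_ K2] := DK t i.+1 i.+2 i.+3 (ltn_trans ti (ltnSn i)) (ltnSn _) (ltnSn _) im.
  move: K1 K2; rewrite (D_sym t) (D_sym t) (D_sym t) (D_sym t); lra.
- have [_ K1] := DK i i.+1 i.+3 t (ltnSn i) (ltn_trans (ltnSn _) (ltnSn _)) it tm.
  have [K2 _] := DK i.+1 i.+2 i.+3 t (ltnSn _) (ltnSn _) it tm.
  lra.
Qed.

Lemma Qform_diff_ge0 i : kalmanson_upto m D -> (i.+3 < m)%N ->
  0 <= Qform i i.+3 - Qform i.+1 i.+2.
Proof.
move=> DK im; rewrite Qform_diffE //.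
by apply: addr_ge0; rewrite big_nat_cond; apply: sumr_ge0 => t /andP[tm _];
  apply: Qgap_ge0 => //; lia.
Qed.

End Qform.

Section BlockMeans.
Variables (R : realFieldType) (n m : nat) (pi : {perm 'I_n}) (a : nat -> nat)
  (mu : 'I_n -> R).
Hypothesis a_mono : forall r, (r < m)%N -> (a r <= a r.+1)%N.
Hypothesis mu_ge0 : forall x, 0 <= mu x.
Hypothesis block_mass1 :
  forall r, (r < m)%N -> \sum_(k < n | in_block a r k) mu (pi k) = 1.

Definition block_mean (r : nat) (f : 'I_n -> R) : R :=
  \sum_(k < n | in_block a r k) mu (pi k) * f k.

Lemma eq_block_mean r (f g : 'I_n -> R) : f =1 g -> block_mean r f = block_mean r g.
Proof. by move=> fg; apply: eq_bigr => k _; rewrite fg. Qed.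

Lemma block_meanD r (f g : 'I_n -> R) :
  block_mean r (fun k => f k + g k) = block_mean r f + block_mean r g.
Proof. by rewrite -big_split; apply: eq_bigr => k _; rewrite mulrDr. Qed.

Lemma block_mean_cst r (c : R) : (r < m)%N -> block_mean r (fun _ => c) = c.
Proof. by move=> rm; rewrite /block_mean -big_distrl /= block_mass1 ?mul1r. Qed.

Lemma ler_block_mean r (f g : 'I_n -> R) :
  (forall k, in_block a r k -> f k <= g k) -> block_mean r f <= block_mean r g.
Proof. by move=> fg; apply: ler_sum => k rk; rewrite ler_wpM2l ?fg. Qed.

Lemma block_distE (d : 'I_n -> 'I_n -> R) r s :
  block_dist d pi a mu r s =
  block_mean r (fun x => block_mean s (fun y => d (pi x) (pi y))).
Proof.
apply: eq_bigr => x _; rewrite big_distrr; apply: eq_bigr => y _.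
exact/esym/mulrA.
Qed.

Lemma in_block_ltn r s (x y : 'I_n) : (r < s)%N -> (s < m)%N ->
  in_block a r x -> in_block a s y -> (x < y)%N.
Proof.
move=> rs sm /andP[_ xa] /andP[ay _].
have a_homo : {in [pred t | t <= m] &, {homo a : t u / t <= u}}%N.
  apply: homo_leq_in => [//||t u _ um k /andP[_ /ltnW ku]|t _].
  - exact: leq_trans.
  - by rewrite inE (leq_trans ku um).
  - by rewrite inE; apply: a_mono.
have ars : (a r.+1 <= a s)%N by rewrite a_homo ?inE //; lia.
exact: leq_trans xa (leq_trans ars ay).
Qed.

Lemma kalmanson_block_dist (d : 'I_n -> 'I_n -> R) :
  kalmanson d pi -> kalmanson_upto m (block_dist d pi a mu).
Proof.
move=> dK p q r s pq qr rs sm.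
have rm : (r < m)%N := ltn_trans rs sm.
have qm : (q < m)%N := ltn_trans qr rm.
have pm : (p < m)%N := ltn_trans pq qm.
pose M (F : 'I_n -> 'I_n -> 'I_n -> 'I_n -> R) :=
  block_mean p (fun x => block_mean q (fun y =>
    block_mean r (fun z => block_mean s (fun w => F x y z w)))).
have MD F G : M (fun x y z w => F x y z w + G x y z w) = M F + M G.
  rewrite /M -block_meanD; apply: eq_block_mean => x.
  rewrite -block_meanD; apply: eq_block_mean => y.
  rewrite -block_meanD; apply: eq_block_mean => z; exact: block_meanD.
have M_le F G : (forall x y z w : 'I_n, (x < y < z)%N -> (z < w)%N ->
    F x y z w <= G x y z w) -> M F <= M G.
  move=> FG; apply: ler_block_mean => x px; apply: ler_block_mean => y qy.
  apply: ler_block_mean => z rz; apply: ler_block_mean => w sw.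
  by rewrite FG ?(in_block_ltn pq _ px qy) ?(in_block_ltn qr _ qy rz)
    ?(in_block_ltn rs _ rz sw) ?(ltn_trans qr).
have [Mxy Mzw Mxz] : [/\
    M (fun x y _ _ => d (pi x) (pi y)) = block_dist d pi a mu p q,
    M (fun _ _ z w => d (pi z) (pi w)) = block_dist d pi a mu r s &
    M (fun x _ z _ => d (pi x) (pi z)) = block_dist d pi a mu p r].
  by split; rewrite block_distE /M;
    do ![apply: eq_block_mean => ? | rewrite block_mean_cst //].
have [Myw Mxw Myz] : [/\
    M (fun _ y _ w => d (pi y) (pi w)) = block_dist d pi a mu q s,
    M (fun x _ _ w => d (pi x) (pi w)) = block_dist d pi a mu p s &
    M (fun _ y z _ => d (pi y) (pi z)) = block_dist d pi a mu q r].
  by split; rewrite block_distE /M;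
    do ![apply: eq_block_mean => ? | rewrite block_mean_cst //].
split.
- rewrite -Mxy -Mzw -Mxz -Myw -!MD; apply: M_le => x y z w /andP[xy yz] zw.
  exact: (dK x y z w xy yz zw).1.
- rewrite -Mxw -Myz -Mxz -Myw -!MD; apply: M_le => x y z w /andP[xy yz] zw.
  exact: (dK x y z w xy yz zw).2.
Qed.
End BlockMeans.

Lemma block_distC (R : realFieldType) n (d : 'I_n -> 'I_n -> R) pi a mu r s :
  (forall x y, d x y = d y x) -> block_dist d pi a mu r s = block_dist d pi a mu s r.
Proof.
move=> d_sym; rewrite /block_dist exchange_big; apply: eq_bigr => x _.
by apply: eq_bigr => y _; rewrite d_sym [mu _ * _]mulrC.
Qed.

Theorem mainTheorem8 (R : realFieldType) (n m : nat) (d : 'I_n -> 'I_n -> R)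
  (pi : {perm 'I_n}) (a : nat -> nat) (mu : 'I_n -> R) :
  dissimilarity d -> kalmanson d pi -> (4 <= m)%N ->
  interval_partition n m a -> block_weighting m a pi mu ->
  forall i : nat, (i + 3 < m)%N ->
    0 <= Qdelta d pi m a mu i (i + 3) - Qdelta d pi m a mu i.+1 i.+2.
Proof.
move=> [d_sym _] dK _ [_ [_ a_mono]] [mu_ge0 block_mass1] i; rewrite addn3 => im.
apply: Qform_diff_ge0 im; first by move=> r s; apply: block_distC.
exact: kalmanson_block_dist.
Qed.
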